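(* Let $\psi:\Omega_n\to\mathbb{R}$ be any function, and define $|\!|\!|x|\!|\!|_\psi:=\big(\sum_{i=1}^n\|x_i\|\big)\,\psi\big(\frac{\|x_1\|}{\sum_{i}\|x_i\|},\ldots,\frac{\|x_n\|}{\sum_{i}\|x_i\|}\big)$ for $x=(x_1,\ldots,x_n)\in X^n\setminus\{0_{X^n}\}$ and $|\!|\!|0_{X^n}|\!|\!|_\psi:=0$. (i) If $|\!|\!|\cdot|\!|\!|_\psi\in\mathbf{N}_{X^n}$, then $\psi\in\mathbf{\Psi}_n$. (ii) If $|\!|\!|\cdot|\!|\!|_\psi\in\mathbf{N}^{\rm sc}_{X^n}$, then $\psi\in\mathbf{\Psi}^{\rm sc}_n$ and the norm $\|\cdot\|$ is strictly convex.
   Context: Let $(X,\|\cdot\|)$ be a normed vector space, $n\ge2$. $\mathbf{N}_{X^n}$ is the family of norms $|\!|\!|\cdot|\!|\!|$ on $X^n$ satisfying (A1) $|\!|\!|(x_1,\ldots,x_n)|\!|\!|=|\!|\!|(\pm x_1,\ldots,\pm x_n)|\!|\!|$ for all $x\in X^n$ and all sign choices, and (A2) $|\!|\!|(0_X,\ldots,0_X,v,0_X,\ldots,0_X)|\!|\!|=\|v\|$ for all $v\in X$ in any $i$th position. $\mathbf{N}^{\rm sc}_{X^n}$ is its subclass of strictly convex norms. $\Omega_n:=\{t\in\mathbb{R}^n\mid t_i\ge0,\ \sum_i t_i=1\}$, $\Omega_n^\circ:=\{t\in\Omega_n\mid t_i<1\ \forall i\}$. $\mathbf{\Psi}_n$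 is the class of convex continuous $\psi:\Omega_n\to\mathbb{R}$ with (B1) $\psi(\mathbf{e}_i)=1$ for all standard unit vectors $\mathbf{e}_i$ and (B2) $\psi(t)\ge(1-t_i)\psi\big(\frac{t_1}{1-t_i},\ldots,\frac{t_{i-1}}{1-t_i},0,\frac{t_{i+1}}{1-t_i},\ldots,\frac{t_n}{1-t_i}\big)$ for all $t\in\Omega_n^\circ$, $i=1,\ldots,n$; $\mathbf{\Psi}^{\rm sc}_n$ is its subclass of strictly convex functions. *)

From HB Require Import structures.
From mathcomp Require Import all_boot all_order all_algebra.
From mathcomp Require Import all_classical all_reals all_analysis.
Set Implicit Arguments. Unset Strict Implicit. Unset Printing Implicit Defensive.
Import Order.TTheory GRing.Theory Num.Theory.
Import numFieldNormedType.Exports.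
Local Open Scope classical_set_scope.
Local Open Scope ring_scope.

Section Defs.
Variables (R : realType).

Definition Omega (n : nat) : set 'rV[R]_n :=
  [set t | (forall i, 0 <= t ord0 i) /\ \sum_(i < n) t ord0 i = 1].

Definition Omega_int (n : nat) : set 'rV[R]_n :=
  [set t | Omega t /\ (forall i, t ord0 i < 1)].

Definition unitvec (n : nat) (i : 'I_n) : 'rV[R]_n := \row_j (i == j)%:R.

Definition dropvec (n : nat) (t : 'rV[R]_n) (i : 'I_n) : 'rV[R]_n :=
  \row_j (if j == i then 0 else t ord0 j / (1 - t ord0 i)).

Definition convex_on (n : nat) (psi : 'rV[R]_n -> R) :=
  forall s t, Omega s -> Omega t -> forall l : R, 0 <= l <= 1 ->
    psi (l *: s + (1 - l) *: t) <= l * psi s + (1 - l) * psi t.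

Definition strictly_convex_on (n : nat) (psi : 'rV[R]_n -> R) :=
  forall s t, Omega s -> Omega t -> s <> t -> forall l : R, 0 < l < 1 ->
    psi (l *: s + (1 - l) *: t) < l * psi s + (1 - l) * psi t.

(* the class Psi_n (psi is only relevant on Omega_n) *)
Definition PsiClass (n : nat) (psi : 'rV[R]_n -> R) : Prop :=
  [/\ convex_on psi,
      {within @Omega n, continuous psi},
      (forall i, psi (unitvec i) = 1) &
      (forall t, Omega_int t -> forall i,
         psi t >= (1 - t ord0 i) * psi (dropvec t i))].

Definition PsiClass_sc (n : nat) (psi : 'rV[R]_n -> R) : Prop :=
  PsiClass psi /\ strictly_convex_on psi.

Variable X : normedModType R.

Definition is_norm (n : nat) (N : ('I_n -> X) -> R) : Prop :=
  [/\ (forall x, N x = 0 <-> (forall i, x i = 0)),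
      (forall (a : R) x, N (fun i => a *: x i) = `|a| * N x) &
      (forall x y, N (fun i => x i + y i) <= N x + N y)].

Definition in_NXn (n : nat) (N : ('I_n -> X) -> R) : Prop :=
  [/\ is_norm N,
      (* (A1) *)
      (forall x (eps : 'I_n -> bool),
         N (fun i => if eps i then - x i else x i) = N x) &
      (* (A2) *)
      (forall (i : 'I_n) (v : X), N (fun j => if j == i then v else 0) = `|v|)].

Definition strictly_convex_Nn (n : nat) (N : ('I_n -> X) -> R) : Prop :=
  forall x y, N x = 1 -> N y = 1 -> (exists i, x i <> y i) ->
    N (fun i => 2^-1 *: (x i + y i)) < 1.

Definition in_NXn_sc (n : nat) (N : ('I_n -> X) -> R) : Prop :=
  in_NXn N /\ strictly_convex_Nn N.

Definition strictly_convex_norm : Prop :=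
  forall x y : X, `|x| = 1 -> `|y| = 1 -> x <> y -> `|2^-1 *: (x + y)| < 1.

(* |||x|||_psi ; sum ||x_i|| = 0 exactly when x = 0 *)
Definition psi_norm (n : nat) (psi : 'rV[R]_n -> R) (x : 'I_n -> X) : R :=
  let S := \sum_(i < n) `|x i| in
  if S == 0 then 0 else S * psi (\row_i (`|x i| / S)).

End Defs.

(* Fix a unit vector u of X and embed Omega_n into X^n by t |-> (t_1 u, ..., t_n u).
   On the image the norm |||.|||_psi is psi itself, so every property of psi is read off
   a property of the norm: convexity from the triangle inequality; continuity from the
   Lipschitz bound |psi s - psi t| <= sum_j |s_j - t_j|, which (A2) gives; psi(e_i) = 1
   from (A2); and (B2) from the triangle inequality applied to a vector and its sign flip
   in the i-th coordinate (A1), whose sum is twice the vector with the i-th coordinate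
   deleted.  For strict convexity, rescale two distinct points of Omega_n to norm one and
   apply strict convexity of |||.|||_psi; strict convexity of X follows by embedding X
   into a single coordinate, where (A2) makes |||.|||_psi agree with the norm of X. *)

From HB Require Import structures.
From mathcomp Require Import all_boot all_order all_algebra.
From mathcomp Require Import all_classical all_reals all_analysis.
From mathcomp Require Import lra ring.
Import Order.TTheory GRing.Theory Num.Theory.
Import numFieldNormedType.Exports.
Local Open Scope ring_scope.

Lemma scalerIv {F : fieldType} {V : lmodType F} {v : V} :
  v != 0 -> injective ( *:%R^~ v : F -> V).
Proof.
move=> v0 a b /eqP; rewrite -subr_eq0 -scalerBl scaler_eq0 (negbTE v0) orbF.
by rewrite subr_eq0 => /eqP.
Qed.

Lemma normr_mx_entry_le {R : realType} {k l : nat} (M : 'M[R]_(k, l)) i j :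
  `|M i j| <= `|M|.
Proof.
change (`|M i j| <= mx_norm M); rewrite mx_normrE.
exact: (le_bigmax _ (fun ij : 'I_k * 'I_l => `|M ij.1 ij.2|) (i, j)).
Qed.

Lemma Omega_convex {R : realType} {n : nat} {s t : 'rV[R]_n} {l : R} :
  Omega s -> Omega t -> 0 <= l <= 1 -> Omega (l *: s + (1 - l) *: t).
Proof.
move=> [s0 s1] [t0 t1] /andP[l0 l1]; split.
  by move=> i; rewrite !mxE addr_ge0 // mulr_ge0 // subr_ge0.
under eq_bigr do rewrite !mxE.
by rewrite big_split /= -!mulr_sumr s1 t1 !mulr1 subrKC.
Qed.

Section TupleNorm.
Context {R : realType} {X : normedModType R} {n : nat} {N : ('I_n -> X) -> R}.
Hypothesis normN : is_norm N.

Lemma tnorm0 : N (fun=> 0) = 0.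
Proof. by case: normN => N0 _ _; apply/N0. Qed.

Lemma tnormZ (a : R) x : N (fun i => a *: x i) = `|a| * N x.
Proof. by case: normN. Qed.

Lemma tnormD x y : N (fun i => x i + y i) <= N x + N y.
Proof. by case: normN. Qed.

Lemma tnorm_ge0 x : 0 <= N x.
Proof.
have := tnormD x (fun i => -1 *: x i).
have -> : (fun i => x i + -1 *: x i) = fun=> 0.
  by apply: funext => i; rewrite scaleN1r subrr.
by rewrite tnorm0 tnormZ normrN normr1 mul1r; lra.
Qed.

Lemma tnorm_sum (F : 'I_n -> 'I_n -> X) :
  N (fun j => \sum_i F i j) <= \sum_i N (F i).
Proof.
pose N' (f : {ffun 'I_n -> X}) := N f.
have -> : (fun j => \sum_i F i j) = (fun j => (\sum_i [ffun k => F i k]) j).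
  by apply: funext => j; rewrite sum_ffunE; apply: eq_bigr => i _; rewrite ffunE.
have -> : \sum_i N (F i) = \sum_i N' [ffun k => F i k].
  by apply: eq_bigr => i _; congr N; apply: funext => k; rewrite ffunE.
apply: (big_ind2 (fun a b => N' a <= b)) => [|a b c d ab cd|//].
  rewrite (_ : N' 0 = 0) // /N' -tnorm0; congr N.
  by apply: funext => j; rewrite ffunE.
have -> : N' (a + c) = N (fun j => a j + c j).
  by congr N; apply: funext => j; rewrite ffunE.
exact: le_trans (tnormD _ _) (lerD ab cd).
Qed.

Lemma tnorm_le_subr x y : N x <= N (fun i => x i - y i) + N y.
Proof.
have := tnormD (fun i => x i - y i) y.
by have -> // : (fun i => x i - y i + y i) = x by apply: funext => i; rewrite subrK.
Qed.

(* Strict convexity at the midpoint propagates to every interior point: write the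
   point as a combination of the midpoint and the nearer endpoint. *)
Lemma tnorm_strict_convex {x y : 'I_n -> X} {mu : R} : strictly_convex_Nn N ->
  N x = 1 -> N y = 1 -> (exists i, x i <> y i) -> 0 < mu < 1 ->
  N (fun j => mu *: x j + (1 - mu) *: y j) < 1.
Proof.
move=> Nsc x1 y1 xy /andP[mu0 mu1].
pose m j := 2^-1 *: (x j + y j).
have m1 : N m < 1 := Nsc x y x1 y1 xy.
have m0 := tnorm_ge0 m.
have [mu_le|mu_gt] := lerP mu 2^-1.
  have -> : (fun j => mu *: x j + (1 - mu) *: y j) =
            (fun j => (2 * mu) *: m j + (1 - 2 * mu) *: y j).
    apply: funext => j; rewrite /m scalerA scalerDr -addrA -scalerDl.
    by congr (_ *: _ + _ *: _); field.
  apply: le_lt_trans (tnormD _ _) _.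
  by rewrite (tnormZ _ m) (tnormZ _ y) y1 !ger0_norm; try lra; nra.
have -> : (fun j => mu *: x j + (1 - mu) *: y j) =
          (fun j => (2 * (1 - mu)) *: m j + (2 * mu - 1) *: x j).
  apply: funext => j; rewrite /m scalerA scalerDr addrAC -scalerDl.
  by congr (_ *: _ + _ *: _); field.
apply: le_lt_trans (tnormD _ _) _.
by rewrite (tnormZ _ m) (tnormZ _ x) x1 !ger0_norm; try lra; nra.
Qed.

End TupleNorm.

Lemma tnorm_ray_le {R : realType} {X : normedModType R} {n : nat}
    {N : ('I_n -> X) -> R} {u : X} (c : 'I_n -> R) :
  `|u| = 1 -> in_NXn N -> N (fun j => c j *: u) <= \sum_i `|c i|.
Proof.
move=> u1 [normN _ NA2].
have -> : (fun j => c j *: u) =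
          (fun j => \sum_i (if j == i then c i *: u else 0)).
  by apply: funext => j; rewrite -big_mkcond (big_pred1 j) // => i; rewrite eq_sym.
apply: le_trans (tnorm_sum normN _) _.
by apply: ler_sum => i _; rewrite NA2 normrZ u1 mulr1.
Qed.

Section PsiNorm.
Context {R : realType} {X : normedModType R} {n : nat} {psi : 'rV[R]_n -> R} {u : X}.
Hypothesis u1 : `|u| = 1.

Let u_neq0 : u != 0.
Proof. by rewrite -normr_eq0 u1 oner_neq0. Qed.

Lemma psi_norm_ray (c : 'I_n -> R) : (forall j, 0 <= c j) -> 0 < \sum_i c i ->
  psi_norm psi (fun j => c j *: u) = (\sum_i c i) * psi (\row_j (c j / \sum_i c i)).
Proof.
move=> c0 S0; rewrite /psi_norm.
have normc j : `|c j *: u| = c j by rewrite normrZ u1 mulr1 ger0_norm.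
under eq_bigr do rewrite normc.
by rewrite (gt_eqF S0); congr (_ * psi _); apply/rowP => j; rewrite !mxE normc.
Qed.

Lemma psi_norm_Omega {t} : Omega t -> psi_norm psi (fun j => t ord0 j *: u) = psi t.
Proof.
move=> [t0 t1]; rewrite psi_norm_ray // t1 ?ltr01 // mul1r.
by congr psi; apply/rowP => j; rewrite mxE divr1.
Qed.

Hypothesis psiN : in_NXn (psi_norm (X := X) psi).

Let normN : is_norm (psi_norm (X := X) psi).
Proof. by case: psiN. Qed.

Lemma psi_unitvec i : psi (unitvec R i) = 1.
Proof.
have Omega_e : Omega (unitvec R i).
  split=> [j|]; first by rewrite mxE ler0n.
  by rewrite (bigD1 i) //= big1 => [|j /negbTE ji]; rewrite !mxE ?eqxx ?addr0 // eq_sym ji.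
rewrite -psi_norm_Omega // -[RHS]u1; case: psiN => _ _ /(_ i u) <-; congr psi_norm.
by apply: funext => j; rewrite mxE eq_sym; case: eqP; rewrite ?scale1r ?scale0r.
Qed.

Lemma psi_convex : convex_on psi.
Proof.
move=> s t Os Ot l l01; have /andP[l0 l1] := l01.
rewrite -(psi_norm_Omega (Omega_convex Os Ot l01)) -psi_norm_Omega //.
rewrite -(psi_norm_Omega Ot).
have -> : (fun j => (l *: s + (1 - l) *: t) ord0 j *: u) =
          (fun j => l *: (s ord0 j *: u) + (1 - l) *: (t ord0 j *: u)).
  by apply: funext => j; rewrite !mxE !scalerA -scalerDl.
apply: le_trans (tnormD normN _ _) _.
by rewrite !tnormZ // !ger0_norm ?subr_ge0.
Qed.

Lemma psi_lipschitz {s t} : Omega s -> Omega t ->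
  `|psi s - psi t| <= \sum_j `|s ord0 j - t ord0 j|.
Proof.
move=> Os Ot; rewrite -(psi_norm_Omega Os) -(psi_norm_Omega Ot).
have ray_sub (a b : 'rV[R]_n) : (fun j => a ord0 j *: u - b ord0 j *: u) =
    (fun j => (a ord0 j - b ord0 j) *: u) by apply: funext => j; rewrite scalerBl.
have st := tnorm_le_subr normN (fun j => s ord0 j *: u) (fun j => t ord0 j *: u).
have ts := tnorm_le_subr normN (fun j => t ord0 j *: u) (fun j => s ord0 j *: u).
rewrite ray_sub in st; rewrite ray_sub in ts.
have := tnorm_ray_le (fun j => s ord0 j - t ord0 j) u1 psiN.
have := tnorm_ray_le (fun j => t ord0 j - s ord0 j) u1 psiN.
under eq_bigr do rewrite distrC.
by rewrite ler_norml; lra.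
Qed.

Lemma psi_continuous : (0 < n)%N -> {within @Omega R n, continuous psi}%classic.
Proof.
move=> n0; apply/subspace_continuousP => s Os; apply/cvgrPdist_le => e e0.
have n0R : 0 < n%:R :> R by rewrite ltr0n.
rewrite near_withinE.
have /cvgrPdist_lt/(_ (e / n%:R)) := @cvg_id _ (nbhs s).
rewrite divr_gt0 // => /(_ isT); apply: filterS => t st Ot.
rewrite /from_subspace; apply: le_trans (psi_lipschitz Os Ot) _.
apply: (@le_trans _ _ (\sum_(j < n) `|s - t|)).
  by apply: ler_sum => j _; have := normr_mx_entry_le (s - t) ord0 j; rewrite !mxE.
by rewrite sumr_const card_ord -mulr_natr -ler_pdivlMr // ltW.
Qed.

Lemma psi_dropvec t : Omega_int t -> forall i,
  (1 - t ord0 i) * psi (dropvec t i) <= psi t.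
Proof.
move=> [Ot t_lt1] i; have [t0 t1] := Ot.
pose x j := t ord0 j *: u.
pose c j := if j == i then 0 else t ord0 j.
have c0 j : 0 <= c j by rewrite /c; case: ifP.
have Sc : \sum_j c j = 1 - t ord0 i.
  rewrite -t1 (bigD1 i) //= [in RHS](bigD1 i) //= /c eqxx add0r addrC addrK.
  by apply: eq_bigr => j /negbTE ->.
have Sc0 : 0 < \sum_j c j by rewrite Sc subr_gt0.
have flip_sum : (fun j => x j + (if j == i then - x j else x j)) =
                (fun j => 2 *: (c j *: u)).
  apply: funext => j; rewrite /c /x; case: ifP => _.
    by rewrite subrr scale0r scaler0.
  by rewrite scalerDl scale1r.
have := tnormD normN x (fun j => if j == i then - x j else x j).
case: psiN => _ NA1 _; rewrite flip_sum tnormZ // NA1 psi_norm_ray //.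
rewrite psi_norm_Omega // ger0_norm // Sc.
have -> : \row_j (c j / (1 - t ord0 i)) = dropvec t i.
  by apply/rowP => j; rewrite !mxE /c; case: ifP; rewrite ?mul0r.
lra.
Qed.

Lemma psi_gt0 {s} : Omega s -> 0 < psi s.
Proof.
move=> Os; rewrite -(psi_norm_Omega Os) lt_def tnorm_ge0 // andbT.
apply/eqP; case: normN => N0 _ _ /N0 s0.
have [_] := Os; rewrite big1 => [/eqP|j _]; first by rewrite eq_sym oner_eq0.
by apply: (scalerIv u_neq0); rewrite scale0r s0.
Qed.

(* With A = psi s, B = psi t, the point l s + (1 - l) t is mapped to
   D (mu a + (1 - mu) b), where a, b are the norm-one rescalings of s, t,
   D = l A + (1 - l) B and mu = l A / D. *)
Lemma psi_strictly_convex : strictly_convex_Nn (psi_norm (X := X) psi) ->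
  strictly_convex_on psi.
Proof.
move=> Nsc s t Os Ot st l /andP[l0 l1].
have A0 := psi_gt0 Os; have B0 := psi_gt0 Ot.
set A := psi s; set B := psi t.
pose a j := A^-1 *: (s ord0 j *: u).
pose b j := B^-1 *: (t ord0 j *: u).
have a1 : psi_norm psi a = 1.
  by rewrite tnormZ // psi_norm_Omega // ger0_norm ?invr_ge0 ?ltW // mulVf ?gt_eqF.
have b1 : psi_norm psi b = 1.
  by rewrite tnormZ // psi_norm_Omega // ger0_norm ?invr_ge0 ?ltW // mulVf ?gt_eqF.
pose D := l * A + (1 - l) * B.
have D0 : 0 < D by rewrite addr_gt0 // mulr_gt0 // subr_gt0.
pose mu := l * A / D.
have mu01 : 0 < mu < 1.
  by rewrite divr_gt0 ?mulr_gt0 //= ltr_pdivrMr // mul1r ltrDl mulr_gt0 ?subr_gt0.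
have ab : exists i, a i <> b i.
  apply/existsNP => ab; apply: st.
  have sAtB i : A^-1 * s ord0 i = B^-1 * t ord0 i.
    by apply: (scalerIv u_neq0); rewrite -!scalerA; apply: ab.
  have AB : A^-1 = B^-1.
    have [[_ s1] [_ t1]] := (Os, Ot).
    by rewrite -[A^-1]mulr1 -s1 -[B^-1]mulr1 -t1 !mulr_sumr; apply: eq_bigr.
  apply/rowP => i; have := sAtB i; rewrite AB => /(congr1 ( *%R B)).
  by rewrite !mulrA mulfV ?gt_eqF // !mul1r.
have := tnorm_strict_convex normN Nsc a1 b1 ab mu01.
rewrite -(psi_norm_Omega (Omega_convex Os Ot _)); last by rewrite !ltW.
have -> : (fun j => (l *: s + (1 - l) *: t) ord0 j *: u) =
          (fun j => D *: (mu *: a j + (1 - mu) *: b j)).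
  apply: funext => j; rewrite /a /b !mxE !scalerA -scalerDl scalerA.
  by congr (_ *: _); rewrite /mu /D; field; rewrite !gt_eqF // -/D.
rewrite tnormZ // ger0_norm ?ltW // => mid_lt1.
by rewrite -[ltRHS]/D -[ltRHS]mulr1 ltr_pM2l.
Qed.

End PsiNorm.

Lemma strictly_convex_norm_coord {R : realType} {X : normedModType R} {n : nat}
    {N : ('I_n -> X) -> R} :
  (0 < n)%N -> in_NXn_sc N -> strictly_convex_norm X.
Proof.
move=> n0 [[_ _ NA2] Nsc] x y x1 y1 xy; pose i0 := Ordinal n0.
have := Nsc (fun j => if j == i0 then x else 0) (fun j => if j == i0 then y else 0).
rewrite !NA2 => /(_ x1 y1).
have -> : (fun j => 2^-1 *: ((if j == i0 then x else 0) + (if j == i0 then y else 0))) =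
          (fun j => if j == i0 then 2^-1 *: (x + y) else 0).
  by apply: funext => j; case: ifP; rewrite ?addr0 ?scaler0.
by rewrite NA2; apply; exists i0; rewrite eqxx.
Qed.

Theorem theorem2p12 (R : realType) (X : normedModType R) (n : nat)
  (hn : (2 <= n)%N) (hX : exists x : X, x != 0) (psi : 'rV[R]_n -> R) :
  (in_NXn (psi_norm (X := X) psi) -> PsiClass psi) /\
  (in_NXn_sc (psi_norm (X := X) psi) ->
     PsiClass_sc psi /\ strictly_convex_norm X).
Proof.
have n0 : (0 < n)%N by apply: leq_trans hn.
have [x x0] := hX; pose u := `|x|^-1 *: x.
have u1 : `|u| = 1 by apply: normfZV.
have psi_class : in_NXn (psi_norm (X := X) psi) -> PsiClass psi.
  move=> psiN; split.
  - exact: psi_convex u1 psiN.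
  - exact: psi_continuous u1 psiN n0.
  - exact: psi_unitvec u1 psiN.
  - exact: psi_dropvec u1 psiN.
split=> // -[psiN Nsc]; split; last exact: strictly_convex_norm_coord n0 (conj psiN Nsc).
by split; [apply: psi_class | apply: psi_strictly_convex u1 psiN Nsc].
Qed.
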